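(* Let $L\in\mathbb{R}^{m\times m}$ satisfy $\|\mathrm{e}^{\omega L}\|_\infty\le1$ for all $\omega>0$, and let $f$ satisfy: there exist $\rho>0$ and $\omega_0^+>0$ such that $|\xi+\omega f(\xi)|\le\rho$ for all $\xi\in[-\rho,\rho]$, $\omega\in(0,\omega_0^+]$. Consider the scheme $$u^{(1)}=\mathrm{e}^{\frac{2\tau}{3}L}u^n+\tfrac{2\tau}{3}\mathrm{e}^{\frac{2\tau}{3}L}f(u^n),$$ $$u^{(2)}=\mathrm{e}^{\frac{2\tau}{3}L}u^n+\tfrac{2\tau}{3}\Big(\tfrac13\mathrm{e}^{\frac{2\tau}{3}L}f(u^n)+\tfrac23 f(u^{(1)})\Big),$$ $$u^{n+1}=\mathrm{e}^{\tau L}u^n+\tau\Big(\tfrac{4}{16}\mathrm{e}^{\tau L}f(u^n)+\tfrac{3}{16}\mathrm{e}^{\frac{\tau}{3}L}f(u^{(1)})+\tfrac{9}{16}\mathrm{e}^{\frac{\tau}{3}L}f(u^{(2)})\Big).$$ If $\|u^n\|_\infty\le\rho$ and $0<\tau\le\frac34\omega_0^+$, then $\|u^{n+1}\|_\infty\le\rho$.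
   Context: $\|\cdot\|_\infty$ is the vector $\infty$-norm and induced matrix norm; $f(u)$ for a vector $u$ is applied componentwise. *)

From HB Require Import structures.
From mathcomp Require Import all_boot all_order all_algebra.
From mathcomp Require Import all_classical all_reals topology normedtype sequences.
Set Implicit Arguments. Unset Strict Implicit. Unset Printing Implicit Defensive.
Import Order.TTheory GRing.Theory Num.Theory numFieldNormedType.Exports.
Local Open Scope ring_scope.

(* Matrix exponential, defined entrywise as the limit of the exponential series
   sum_k A^k / k!  (the series converges absolutely for every square matrix). *)
Definition expm (R : realType) (m : nat) (A : 'M[R]_m) : 'M[R]_m :=
  \matrix_(i, j) limn (series (fun k : nat => ((k`!%:R)^-1 *: A ^+ k) i j)).

Definition vnorm_inf (R : realType) (m : nat) (u : 'cV[R]_m) : R :=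
  \big[Num.max/0]_(i < m) `|u i ord0|.

Definition mnorm_inf (R : realType) (m : nat) (A : 'M[R]_m) : R :=
  \big[Num.max/0]_(i < m) \sum_(j < m) `|A i j|.

Definition fvec (R : realType) (m : nat) (f : R -> R) (u : 'cV[R]_m) : 'cV[R]_m :=
  \col_i f (u i ord0).

Definition scheme_step (R : realType) (m : nat) (L : 'M[R]_m) (f : R -> R)
    (tau : R) (u : 'cV[R]_m) : 'cV[R]_m :=
  let E23 := expm ((2 * tau / 3) *: L) in
  let E13 := expm ((tau / 3) *: L) in
  let E1  := expm (tau *: L) in
  let u1 := E23 *m u + (2 * tau / 3) *: (E23 *m fvec f u) in
  let u2 := E23 *m u + (2 * tau / 3) *:
              ((1 / 3) *: (E23 *m fvec f u) + (2 / 3) *: fvec f u1) in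
  E1 *m u + tau *: ((4 / 16) *: (E1 *m fvec f u)
                    + (3 / 16) *: (E13 *m fvec f u1)
                    + (9 / 16) *: (E13 *m fvec f u2)).


(* Write E_w for exp(w L).  Every vector produced by the scheme is a convex
   combination of vectors E_w v and of forward Euler steps v + w' f(v), possibly
   followed by some E_w, where |v| <= rho and 0 < w' <= omega0; the Euler step
   stays in the rho-ball by the hypothesis on f and E_w does not increase the
   norm.
   Indeed u1 = E_{2tau/3} (u + (2tau/3) f(u)),
   u2 = 1/3 (u1 + (4tau/3) f(u1)) + 2/3 E_{2tau/3} u, and, by the semigroup law
   E_{tau/3} E_{2tau/3} = E_tau,
   u^{n+1} = 37/64 E_tau (u + (10tau/37) f(u)) + 27/64 E_{tau/3} (u2 + (4tau/3) f(u2)),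
   where the largest Euler step 4tau/3 is at most omega0.  The semigroup law
   for the exponential series follows from the truncated Cauchy product: its
   defect is dominated entrywise by the corresponding scalar defect for
   exp(|a| ||L||) exp(|b| ||L||), which tends to 0. *)

From HB Require Import structures.
From mathcomp Require Import all_boot all_order all_algebra.
From mathcomp Require Import all_classical all_reals topology normedtype sequences.
From mathcomp Require Import exp ring lra.
Import Order.TTheory GRing.Theory Num.Theory numFieldNormedType.Exports.
Local Open Scope ring_scope.

Lemma sum_square_antidiag {V : nmodType} (g : nat -> nat -> V) (N : nat) :
  \sum_(i < N) \sum_(j < N) g i j =
  \sum_(k < N) \sum_(i < k.+1) g i (k - i)%N
  + \sum_(i < N) \sum_(N - i <= j < N) g i j.
Proof.
have triangle M : \sum_(i < M) \sum_(j < M - i) g i j =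
                  \sum_(k < M) \sum_(i < k.+1) g i (k - i)%N.
  elim: M => [|M IH]; first by rewrite !big_ord0.
  rewrite big_ord_recr /= [RHS]big_ord_recr /= -IH.
  rewrite subSnn big_ord1 [in RHS]big_ord_recr /= subnn addrA; congr (_ + _).
  rewrite -big_split /=; apply: eq_bigr => i _.
  by rewrite subSn ?(ltnW (ltn_ord i)) // big_ord_recr.
rewrite -triangle -big_split /=; apply: eq_bigr => i _.
rewrite -(big_mkord xpredT) -(big_mkord xpredT (g i)).
by rewrite (big_cat_nat _ (n := N - i)) //= leq_subr.
Qed.

Lemma exp_coeffD (R : realType) (a b : R) (k : nat) :
  \sum_(i < k.+1) exp_coeff a i * exp_coeff b (k - i)%N = exp_coeff (a + b) k.
Proof.
rewrite /exp_coeff /= addrC exprDn mulr_suml; apply: eq_bigr => i _.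
have le_ik : (i <= k)%N by rewrite -ltnS.
have fact_binom := congr1 (fun n : nat => n%:R : R) (bin_fact le_ik).
rewrite /= !natrM in fact_binom.
have fact_neq0 p : (p`!%:R : R) != 0 by rewrite pnatr_eq0 -lt0n fact_gt0.
have binom_neq0 : ('C(k, i)%:R : R) != 0 by rewrite pnatr_eq0 -lt0n bin_gt0.
rewrite -mulr_natr -fact_binom; field.
by rewrite binom_neq0 !fact_neq0.
Qed.

Lemma exp_coeff_normM (R : realType) (a K : R) (i : nat) : 0 <= K ->
  `|exp_coeff a i| * K ^+ i = exp_coeff (`|a| * K) i.
Proof.
move=> K_ge0; rewrite /exp_coeff /= normrM normrX [`|_^-1|]ger0_norm ?invr_ge0 //.
by rewrite exprMn mulrAC.
Qed.

Section TruncatedExponential.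
Context {R : realType} {V : algType R}.

Definition expm_partial (A : V) (a : R) (N : nat) : V :=
  \sum_(k < N) exp_coeff a k *: A ^+ k.

Definition expm_tail (A : V) (a b : R) (N : nat) : V :=
  \sum_(i < N) \sum_(N - i <= j < N) (exp_coeff a i * exp_coeff b j) *: A ^+ (i + j).

Lemma expm_partialM (A : V) (a b : R) (N : nat) :
  expm_partial A a N * expm_partial A b N =
  expm_partial A (a + b) N + expm_tail A a b N.
Proof.
rewrite /expm_partial mulr_suml.
under eq_bigr do rewrite mulr_sumr.
have termM i j : exp_coeff a i *: A ^+ i * (exp_coeff b j *: A ^+ j) =
                 (exp_coeff a i * exp_coeff b j) *: A ^+ (i + j).
  by rewrite -scalerAl -scalerAr scalerA exprD.
under eq_bigr do under eq_bigr do rewrite termM.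
rewrite (sum_square_antidiag
  (fun i j => (exp_coeff a i * exp_coeff b j) *: A ^+ (i + j))); congr (_ + _).
apply: eq_bigr => k _; rewrite -exp_coeffD scaler_suml; apply: eq_bigr => i _.
by rewrite subnKC // -ltnS.
Qed.

End TruncatedExponential.

Lemma expm_partial1 (R : realType) (x : R) (N : nat) :
  expm_partial (1 : R^o) x N = series (exp_coeff x) N.
Proof.
rewrite /expm_partial /series /= big_mkord; apply: eq_bigr => k _.
by rewrite expr1n [_ *: _]mulr1.
Qed.

Lemma cvg_expm_tail1 (R : realType) (x y : R) :
  (expm_tail (1 : R^o) x y N @[N --> \oo] --> 0)%classic.
Proof.
have -> : (0 : R) = expR x * expR y - expR (x + y) by rewrite expRD subrr.
have tailE N : expm_tail (1 : R^o) x y N =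
    series (exp_coeff x) N * series (exp_coeff y) N - series (exp_coeff (x + y)) N.
  by rewrite -!expm_partial1 expm_partialM addrAC subrr add0r.
under eq_cvg do rewrite tailE.
by apply: cvgB; first apply: cvgM; exact: is_cvg_series_exp_coeff.
Qed.

Section InfinityNorms.
Context {R : realType} {n : nat}.

Lemma mnorm_inf_ge0 (A : 'M[R]_n) : 0 <= mnorm_inf A.
Proof. by apply/bigmax_geP; left. Qed.

Lemma row_sum_le_mnorm_inf (A : 'M[R]_n) i : \sum_j `|A i j| <= mnorm_inf A.
Proof. exact: (le_bigmax _ (fun i => \sum_j `|A i j|)). Qed.

Lemma vnorm_inf_ge0 (u : 'cV[R]_n) : 0 <= vnorm_inf u.
Proof. by apply/bigmax_geP; left. Qed.

Lemma entry_le_vnorm_inf (u : 'cV[R]_n) i : `|u i ord0| <= vnorm_inf u.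
Proof. exact: (le_bigmax _ (fun i => `|u i ord0|)). Qed.

Lemma vnorm_inf_leP {u : 'cV[R]_n} {rho : R} : 0 <= rho ->
  vnorm_inf u <= rho <-> forall i, `|u i ord0| <= rho.
Proof.
move=> rho_ge0; split => [/bigmax_leP[_ le_rho] i|le_rho]; first exact: le_rho.
by apply/bigmax_leP.
Qed.

Lemma vnorm_inf_mulmx (A : 'M[R]_n) (u : 'cV[R]_n) :
  vnorm_inf (A *m u) <= mnorm_inf A * vnorm_inf u.
Proof.
apply/vnorm_inf_leP; first by rewrite mulr_ge0 ?mnorm_inf_ge0 ?vnorm_inf_ge0.
move=> i; rewrite mxE; apply: (le_trans (ler_norm_sum _ _ _)).
apply: (@le_trans _ _ (\sum_j `|A i j| * vnorm_inf u)).
  by apply: ler_sum => j _; rewrite normrM ler_wpM2l ?entry_le_vnorm_inf.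
by rewrite -mulr_suml ler_wpM2r ?vnorm_inf_ge0 ?row_sum_le_mnorm_inf.
Qed.

Lemma vnorm_inf_conv (c : R) {rho : R} {v w : 'cV[R]_n} :
  0 <= rho -> 0 <= c <= 1 -> vnorm_inf v <= rho -> vnorm_inf w <= rho ->
  vnorm_inf (c *: v + (1 - c) *: w) <= rho.
Proof.
move=> rho_ge0 /andP[c_ge0 c_le1] /(vnorm_inf_leP rho_ge0) le_v.
move=> /(vnorm_inf_leP rho_ge0) le_w.
apply/vnorm_inf_leP => // i; rewrite !mxE.
apply: (le_trans (ler_normD _ _)).
rewrite !normrM (ger0_norm c_ge0) (@ger0_norm _ (1 - c)) ?subr_ge0 //.
have := le_v i; have := le_w i.
have : 0 <= c * (rho - `|v i ord0|) by rewrite mulr_ge0 ?subr_ge0.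
have : 0 <= (1 - c) * (rho - `|w i ord0|) by rewrite mulr_ge0 ?subr_ge0.
lra.
Qed.

End InfinityNorms.

Lemma exprmx_entry_le (R : realType) (n : nat) (A : 'M[R]_n.+1) k i j :
  `|(A ^+ k) i j| <= mnorm_inf A ^+ k.
Proof.
elim: k i j => [|k IH] i j.
  by rewrite expr0 mxE; case: (i == j); rewrite ?normr1 ?normr0.
rewrite exprS -mulmxE mxE exprS; apply: (le_trans (ler_norm_sum _ _ _)).
apply: (@le_trans _ _ (\sum_l `|A i l| * mnorm_inf A ^+ k)).
  by apply: ler_sum => l _; rewrite normrM ler_wpM2l.
by rewrite -mulr_suml ler_wpM2r ?exprn_ge0 ?mnorm_inf_ge0 ?row_sum_le_mnorm_inf.
Qed.

Section MatrixExponential.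
Context {R : realType} {n : nat} (A : 'M[R]_n.+1).

Lemma cvg_expm_partial (a : R) i j :
  (expm_partial A a N i j @[N --> \oo] --> expm (a *: A) i j)%classic.
Proof.
rewrite /expm mxE.
have -> : (fun k => ((k`!%:R)^-1 *: (a *: A) ^+ k) i j) =
          (fun k => (exp_coeff a k *: A ^+ k) i j).
  by apply/funext => k; rewrite exprZn scalerA mulrC.
have partialE N : expm_partial A a N i j =
                  series (fun k => (exp_coeff a k *: A ^+ k) i j) N.
  by rewrite /series /= /expm_partial summxE big_mkord.
under eq_cvg do rewrite partialE.
apply: (@normed_cvg _ R^o); apply: (series_le_cvg _ _ _
  (is_cvg_series_exp_coeff (`|a| * mnorm_inf A))) => k //=.
- by rewrite exp_coeff_ge0 ?mulr_ge0 ?mnorm_inf_ge0.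
- rewrite mxE normrM -exp_coeff_normM ?mnorm_inf_ge0 //.
  by rewrite ler_wpM2l ?exprmx_entry_le.
Qed.

Lemma entry_expm_tail_le (a b : R) N i j :
  `|expm_tail A a b N i j| <=
  expm_tail (1 : R^o) (`|a| * mnorm_inf A) (`|b| * mnorm_inf A) N.
Proof.
rewrite /expm_tail summxE; apply: (le_trans (ler_norm_sum _ _ _)).
apply: ler_sum => k _; rewrite summxE; apply: (le_trans (ler_norm_sum _ _ _)).
apply: ler_sum => l _; rewrite mxE expr1n [_ *: 1]mulr1 normrM normrM.
rewrite -!exp_coeff_normM ?mnorm_inf_ge0 // mulrACA -exprD.
by rewrite ler_wpM2l ?mulr_ge0 ?exprmx_entry_le.
Qed.

Lemma cvg_expm_tail (a b : R) i j :
  (expm_tail A a b N i j @[N --> \oo] --> 0)%classic.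
Proof.
set x := `|a| * mnorm_inf A; set y := `|b| * mnorm_inf A.
apply: (@squeeze_cvgr _ _ _ _ (fun N => - expm_tail (1 : R^o) x y N)
                              (expm_tail (1 : R^o) x y)).
- by apply: nearW => N; rewrite -ler_norml entry_expm_tail_le.
- by rewrite -oppr0; apply: cvgN; exact: cvg_expm_tail1.
- exact: cvg_expm_tail1.
Qed.

End MatrixExponential.

Lemma expmD (R : realType) (m : nat) (A : 'M[R]_m) (a b : R) :
  expm (a *: A) *m expm (b *: A) = expm ((a + b) *: A).
Proof.
case: m A => [|n] A; first by apply/matrixP => [[]].
apply/matrixP => i j.
have cvg_prod : ((expm_partial A a N *m expm_partial A b N) i j @[N --> \oo] -->
                 (expm (a *: A) *m expm (b *: A)) i j)%classic.
  rewrite mxE; under eq_cvg do rewrite mxE.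
  apply: cvg_big => [|k _]; first exact: add_continuous.
  by apply: cvgM; exact: cvg_expm_partial.
have partialE N : expm_partial A (a + b) N i j =
    (expm_partial A a N *m expm_partial A b N) i j - expm_tail A a b N i j.
  by rewrite mulmxE expm_partialM mxE addrK.
have cvg_sum : (expm_partial A (a + b) N i j @[N --> \oo] -->
                (expm (a *: A) *m expm (b *: A)) i j)%classic.
  under eq_cvg do rewrite partialE.
  rewrite -[(expm _ *m expm _) i j]subr0.
  exact: cvgB cvg_prod (cvg_expm_tail A a b i j).
by rewrite -(cvg_lim _ cvg_sum) // (cvg_lim _ (cvg_expm_partial A (a + b) i j)).
Qed.

Section StrongStability.
Context {R : realType} {m : nat} {L : 'M[R]_m} {f : R -> R} {rho omega0 : R}.
Hypothesis expm_contractive : forall w, 0 < w -> mnorm_inf (expm (w *: L)) <= 1.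
Hypothesis rho_ge0 : 0 <= rho.
Hypothesis euler_invariant : forall xi w,
  -rho <= xi <= rho -> 0 < w <= omega0 -> `|xi + w * f xi| <= rho.

Lemma euler_step_bounded (w : R) (v : 'cV[R]_m) :
  0 < w <= omega0 -> vnorm_inf v <= rho -> vnorm_inf (v + w *: fvec f v) <= rho.
Proof.
move=> w_range /(vnorm_inf_leP rho_ge0) le_v; apply/vnorm_inf_leP => // i.
by rewrite !mxE euler_invariant // -ler_norml.
Qed.

Lemma expm_step_bounded (w : R) (v : 'cV[R]_m) :
  0 < w -> vnorm_inf v <= rho -> vnorm_inf (expm (w *: L) *m v) <= rho.
Proof.
move=> w_gt0 le_v; apply: le_trans (vnorm_inf_mulmx _ _) _.
by rewrite -[rho]mul1r ler_pM ?mnorm_inf_ge0 ?vnorm_inf_ge0 ?expm_contractive.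
Qed.

Lemma exp_euler_step_bounded (w w' : R) (v : 'cV[R]_m) :
  0 < w -> 0 < w' <= omega0 -> vnorm_inf v <= rho ->
  vnorm_inf (expm (w *: L) *m v + w' *: (expm (w *: L) *m fvec f v)) <= rho.
Proof.
move=> w_gt0 w'_range le_v; rewrite scalemxAr -mulmxDr.
by apply: expm_step_bounded => //; apply: euler_step_bounded.
Qed.

Lemma stage2_split (p q g : 'cV[R]_m) (t : R) :
  p + (2 * t / 3) *: ((1 / 3) *: q + (2 / 3) *: g) =
  (1 / 3) *: ((p + (2 * t / 3) *: q) + (4 * t / 3) *: g) + (1 - 1 / 3) *: p.
Proof. by apply/matrixP => i j; rewrite !mxE; ring. Qed.

Lemma final_stage_split (p q h k : 'cV[R]_m) (t : R) :
  p + t *: ((4 / 16) *: q + (3 / 16) *: h + (9 / 16) *: k) =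
  (37 / 64) *: (p + (10 * t / 37) *: q) + (1 - 37 / 64) *:
    ((p + (2 * t / 3) *: ((1 / 3) *: q + (2 / 3) *: h)) + (4 * t / 3) *: k).
Proof. by apply/matrixP => i j; rewrite !mxE; field. Qed.

Lemma scheme_step_bounded (tau : R) (u : 'cV[R]_m) :
  vnorm_inf u <= rho -> 0 < tau <= 3 / 4 * omega0 ->
  vnorm_inf (scheme_step L f tau u) <= rho.
Proof.
move=> le_u /andP[tau_gt0 tau_le]; rewrite /scheme_step /=.
set E23 := expm ((2 * tau / 3) *: L); set E13 := expm ((tau / 3) *: L).
set E1 := expm (tau *: L); set fu := fvec f u.
set u1 := E23 *m u + (2 * tau / 3) *: (E23 *m fu).
set u2 := E23 *m u + (2 * tau / 3) *:
            ((1 / 3) *: (E23 *m fu) + (2 / 3) *: fvec f u1).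
have le_u1 : vnorm_inf u1 <= rho by apply: exp_euler_step_bounded => //; lra.
have le_u2 : vnorm_inf u2 <= rho.
  rewrite /u2 stage2_split -/u1; apply: (vnorm_inf_conv (1 / 3) rho_ge0).
  - by lra.
  - by apply: euler_step_bounded => //; lra.
  - by apply: expm_step_bounded => //; lra.
have E13u2 : E13 *m u2 = E1 *m u + (2 * tau / 3) *:
      ((1 / 3) *: (E1 *m fu) + (2 / 3) *: (E13 *m fvec f u1)).
  have semigroup : E13 *m E23 = E1.
    by rewrite expmD; congr (expm (_ *: L)); field.
  (* Without clearing the bodies, rewriting keeps unfolding [expm]. *)
  rewrite /u2; clearbody E1 E13 E23 u1.
  by rewrite !(mulmxDr, =^~ scalemxAr) !mulmxA semigroup.
rewrite final_stage_split -E13u2; apply: (vnorm_inf_conv (37 / 64) rho_ge0).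
- by lra.
- by apply: exp_euler_step_bounded => //; lra.
- by apply: exp_euler_step_bounded => //; lra.
Qed.

End StrongStability.

Theorem mainTheorem5 (R : realType) (m : nat) (L : 'M[R]_m) (f : R -> R)
    (rho omega0 : R) (u : 'cV[R]_m) (tau : R) :
  (forall omega : R, 0 < omega -> mnorm_inf (expm (omega *: L)) <= 1) ->
  0 < rho -> 0 < omega0 ->
  (forall xi omega : R, -rho <= xi <= rho -> 0 < omega <= omega0 ->
      `|xi + omega * f xi| <= rho) ->
  vnorm_inf u <= rho ->
  0 < tau <= 3 / 4 * omega0 ->
  vnorm_inf (scheme_step L f tau u) <= rho.
Proof.
move=> expm_contractive rho_gt0 _ euler_invariant.
exact: scheme_step_bounded expm_contractive (ltW rho_gt0) euler_invariant tau u.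
Qed.
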